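(* Let $h:(\mathbb{R}^n,0)\to(\mathbb{R}^n,0)$ be a Lipschitz homeomorphism germ such that $c_1\|x\|\le\|h(x)\|\le c_2\|x\|$ for some constants $c_1,c_2>0$ and all $x$ in a neighbourhood of $0$. Then $h$ is an (SSP) map if and only if for every semiline $\ell$ the restriction $h|_\ell$ is an (SSP) map.
   Context: A semiline is a set $\{ta:t\ge0\}$ with $a\in S^{n-1}$. For a set-germ $A\subset\mathbb{R}^k$ at $0$ with $0\in\overline A$, $D(A)=\{a\in S^{k-1}:\exists\, x_i\in A\setminus\{0\},\ x_i\to0,\ x_i/\|x_i\|\to a\}$. For sequences, $\|u_m\|\ll\|v_m\|,\|w_m\|$ means $\|u_m\|/\|v_m\|\to0$ and $\|u_m\|/\|w_m\|\to0$. $A$ satisfies condition (SSP) if for every sequence $a_m\in\mathbb{R}^k$ tending to $0$ with $\lim a_m/\|a_m\|\in D(A)$ there is a sequence $b_m\in A$ with $\|a_m-b_m\|\ll\|a_m\|,\|b_m\|$. A map germ $f:(S,0)\to(\mathbb{R}^n,0)$ defined on a set $S\subset\mathbb{R}^n$ with $0\in\overline S$ is an (SSP) map if its graph $\{(x,f(x)):x\in S\}\subset\mathbb{R}^n\times\mathbb{R}^n$ satisfies condition (SSP) at $(0,0)$. *)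

From HB Require Import structures.
From mathcomp Require Import all_boot all_order all_algebra.
From mathcomp Require Import reals.
Set Implicit Arguments. Unset Strict Implicit. Unset Printing Implicit Defensive.
Import Order.TTheory GRing.Theory Num.Theory.
Local Open Scope ring_scope.

Section Defs.
Variable R : realType.

Definition enorm k (v : 'rV[R]_k) : R := Num.sqrt (\sum_(i < k) v 0 i ^+ 2).

Definition cvg0 k (u : nat -> 'rV[R]_k) : Prop :=
  forall e : R, 0 < e -> exists N, forall m, (N <= m)%N -> enorm (u m) < e.

Definition cvgto k (u : nat -> 'rV[R]_k) (a : 'rV[R]_k) : Prop :=
  cvg0 (fun m => u m - a).

(* ||u_m|| << ||v_m||, i.e. ||u_m|| / ||v_m|| -> 0 *)
Definition negl k (u v : nat -> 'rV[R]_k) : Prop :=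
  forall e : R, 0 < e -> exists N, forall m, (N <= m)%N ->
    enorm (u m) <= e * enorm (v m).

Definition sphere k (a : 'rV[R]_k) : Prop := enorm a = 1.

Definition dir k (x : 'rV[R]_k) : 'rV[R]_k := (enorm x)^-1 *: x.

Definition tangent_dirs k (A : 'rV[R]_k -> Prop) (a : 'rV[R]_k) : Prop :=
  sphere a /\
  exists x : nat -> 'rV[R]_k,
    (forall m, A (x m) /\ x m != 0) /\ cvg0 x /\ cvgto (fun m => dir (x m)) a.

Definition SSP k (A : 'rV[R]_k -> Prop) : Prop :=
  forall a : nat -> 'rV[R]_k, cvg0 a ->
    (exists d, tangent_dirs A d /\ cvgto (fun m => dir (a m)) d) ->
    exists b : nat -> 'rV[R]_k, (forall m, A (b m)) /\
      negl (fun m => a m - b m) a /\ negl (fun m => a m - b m) b.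

Definition graph n (S : 'rV[R]_n -> Prop) (f : 'rV[R]_n -> 'rV[R]_n) :
  'rV[R]_(n + n) -> Prop :=
  fun z => exists x, S x /\ z = row_mx x (f x).

Definition SSP_map n (S : 'rV[R]_n -> Prop) (f : 'rV[R]_n -> 'rV[R]_n) : Prop :=
  SSP (graph S f).

Definition semiline n (a : 'rV[R]_n) : 'rV[R]_n -> Prop :=
  fun x => exists t : R, 0 <= t /\ x = t *: a.

Definition ball0 n (r : R) : 'rV[R]_n -> Prop := fun x => enorm x < r.

Definition homeo_germ n (h : 'rV[R]_n -> 'rV[R]_n) : Prop :=
  h 0 = 0 /\
  exists r : R, 0 < r /\
    (forall x y, ball0 r x -> ball0 r y -> h x = h y -> x = y) /\
    (forall (u : nat -> 'rV[R]_n) x, (forall m, ball0 r (u m)) -> ball0 r x ->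
        cvgto u x -> cvgto (fun m => h (u m)) (h x)) /\
    (forall (u : nat -> 'rV[R]_n) x, (forall m, ball0 r (u m)) -> ball0 r x ->
        cvgto (fun m => h (u m)) (h x) -> cvgto u x) /\
    (forall x, ball0 r x -> exists e : R, 0 < e /\
        forall y, enorm (y - h x) < e -> exists x', ball0 r x' /\ h x' = y).

Definition lipschitz_germ n (h : 'rV[R]_n -> 'rV[R]_n) : Prop :=
  exists r L : R, 0 < r /\ forall x y, ball0 r x -> ball0 r y ->
    enorm (h x - h y) <= L * enorm (x - y).

End Defs.

From HB Require Import structures.
From mathcomp Require Import all_boot all_order all_algebra.
From mathcomp Require Import reals.
From mathcomp Require Import ring lra.
Set Implicit Arguments. Unset Strict Implicit. Unset Printing Implicit Defensive.
Import Order.TTheory GRing.Theory Num.Theory.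
Local Open Scope ring_scope.

(* Near 0 the graph map x |-> (x, h x) is (1 + L)-Lipschitz, so every point of
   the graph satisfies |(x, h x)| <= (1 + L) |x|: any limit direction d of the
   graph has a first component d1 with |d1| >= 1 / (1 + L), in particular
   d1 <> 0.  The key estimate is that a sequence a_m with direction tending to
   d which is strongly approximated by points of the graph is already strongly
   approximated by the graph points over |a_m| d1, which lie over the semiline
   spanned by d1.  Hence d is a limit direction of the graph over that
   semiline, and (SSP) passes from the whole graph to the semilines and back. *)

Section EuclideanNorm.
Variable R : realType.
Implicit Types k : nat.

Lemma enorm_sqr k (x : 'rV[R]_k) : enorm x ^+ 2 = \sum_(i < k) x 0 i ^+ 2.
Proof. by rewrite sqr_sqrtr // sumr_ge0 // => i _; rewrite sqr_ge0. Qed.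

Lemma enorm_ge0 k (x : 'rV[R]_k) : 0 <= enorm x.
Proof. exact: sqrtr_ge0. Qed.

Lemma enorm_eq0 k (x : 'rV[R]_k) : (enorm x == 0) = (x == 0).
Proof.
apply/eqP/eqP => [x0|->]; last first.
  by rewrite /enorm big1 ?sqrtr0 // => i _; rewrite mxE expr0n.
have : \sum_(i < k) x 0 i ^+ 2 == 0 by rewrite -enorm_sqr x0 expr0n.
rewrite psumr_eq0 => [/allP x_0|i _]; last by rewrite sqr_ge0.
apply/matrixP => i j; rewrite mxE (ord1 i).
by apply/eqP; rewrite -sqrf_eq0; apply: x_0; rewrite mem_index_enum.
Qed.

Lemma enorm0 k : enorm (0 : 'rV[R]_k) = 0.
Proof. by apply/eqP; rewrite enorm_eq0. Qed.

Lemma enorm_gt0 k (x : 'rV[R]_k) : (0 < enorm x) = (x != 0).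
Proof. by rewrite lt_def enorm_ge0 andbT enorm_eq0. Qed.

Lemma enormZ k c (x : 'rV[R]_k) : enorm (c *: x) = `|c| * enorm x.
Proof.
rewrite /enorm -sqrtr_sqr -sqrtrM ?sqr_ge0 // mulr_sumr; congr Num.sqrt.
by apply: eq_bigr => i _; rewrite mxE exprMn.
Qed.

Lemma enorm_distC k (x y : 'rV[R]_k) : enorm (x - y) = enorm (y - x).
Proof. by rewrite -opprB -scaleN1r enormZ normrN normr1 mul1r. Qed.

Lemma dot_le_enorm k (x y : 'rV[R]_k) :
  \sum_(i < k) x 0 i * y 0 i <= enorm x * enorm y.
Proof.
have [->|x0] := eqVneq x 0.
  by rewrite enorm0 mul0r big1 // => i _; rewrite mxE mul0r.
have [->|y0] := eqVneq y 0.
  by rewrite enorm0 mulr0 big1 // => i _; rewrite mxE mulr0.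
set s := enorm x; set t := enorm y; set D := \sum_(i < k) _.
have s0 : 0 < s by rewrite enorm_gt0.
have t0 : 0 < t by rewrite enorm_gt0.
have : 0 <= \sum_(i < k) (t * x 0 i - s * y 0 i) ^+ 2.
  by apply: sumr_ge0 => i _; rewrite sqr_ge0.
have -> : \sum_(i < k) (t * x 0 i - s * y 0 i) ^+ 2 =
    t ^+ 2 * \sum_(i < k) x 0 i ^+ 2 + s ^+ 2 * \sum_(i < k) y 0 i ^+ 2
    - (2 * t * s) * D.
  rewrite !mulr_sumr -big_split /= -sumrB.
  by apply: eq_bigr => i _; ring.
rewrite -!enorm_sqr -/s -/t => sum_ge0.
have : (2 * t * s) * D <= (2 * t * s) * (s * t) by nra.
by rewrite ler_pM2l ?mulr_gt0.
Qed.

Lemma enormD k (x y : 'rV[R]_k) : enorm (x + y) <= enorm x + enorm y.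
Proof.
rewrite -(ler_pXn2r (_ : 0 < 2)%N) ?nnegrE ?addr_ge0 ?enorm_ge0 //.
have -> : enorm (x + y) ^+ 2 =
    enorm x ^+ 2 + enorm y ^+ 2 + 2 * \sum_(i < k) x 0 i * y 0 i.
  rewrite !enorm_sqr mulr_sumr -!big_split /=.
  by apply: eq_bigr => i _; rewrite mxE; ring.
have := dot_le_enorm x y; nra.
Qed.

Lemma enorm_sub_trans k (x y z : 'rV[R]_k) :
  enorm (x - z) <= enorm (x - y) + enorm (y - z).
Proof. by have := enormD (x - y) (y - z); rewrite addrA subrK. Qed.

Lemma ler_dist_enorm k (x y : 'rV[R]_k) : `|enorm x - enorm y| <= enorm (x - y).
Proof.
have := enormD (x - y) y; have := enormD (y - x) x.
rewrite !subrK enorm_distC ler_norml; lra.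
Qed.

Lemma enorm_row_mx k1 k2 (x : 'rV[R]_k1) (y : 'rV[R]_k2) :
  enorm (row_mx x y) ^+ 2 = enorm x ^+ 2 + enorm y ^+ 2.
Proof.
by rewrite !enorm_sqr big_split_ord; congr (_ + _); apply: eq_bigr => i _;
  rewrite ?row_mxEl ?row_mxEr.
Qed.

Lemma enorm_lsubmx k1 k2 (v : 'rV[R]_(k1 + k2)) : enorm (lsubmx v) <= enorm v.
Proof.
rewrite -(ler_pXn2r (_ : 0 < 2)%N) ?nnegrE ?enorm_ge0 //.
by rewrite -{2}(hsubmxK v) enorm_row_mx lerDl sqr_ge0.
Qed.

Lemma enorm_row_mx_le k1 k2 (x : 'rV[R]_k1) (y : 'rV[R]_k2) :
  enorm (row_mx x y) <= enorm x + enorm y.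
Proof.
rewrite -(ler_pXn2r (_ : 0 < 2)%N) ?nnegrE ?addr_ge0 ?enorm_ge0 //.
by rewrite enorm_row_mx; have := enorm_ge0 x; have := enorm_ge0 y; nra.
Qed.

Lemma dirK k (x : 'rV[R]_k) : enorm x *: dir x = x.
Proof.
rewrite /dir scalerA; have [->|x0] := eqVneq x 0; first by rewrite scaler0.
by rewrite divff ?scale1r // enorm_eq0.
Qed.

Lemma enorm_dir k (x : 'rV[R]_k) : x != 0 -> enorm (dir x) = 1.
Proof.
by move=> x0; rewrite enormZ ger0_norm ?invr_ge0 ?enorm_ge0 // mulVf ?enorm_eq0.
Qed.

Lemma enorm_dirB k (x z : 'rV[R]_k) :
  enorm x * enorm (dir z - dir x) <= 2 * enorm (z - x).
Proof.
have [->|x0] := eqVneq x 0; first by rewrite enorm0 mul0r mulr_ge0 ?enorm_ge0.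
rewrite -[enorm x in X in X <= _]ger0_norm ?enorm_ge0 // -enormZ scalerBr dirK.
have -> : enorm x *: dir z - x = (z - x) + (enorm x *: dir z - z).
  by rewrite [RHS]addrC addrA subrK.
apply: le_trans (enormD _ _) _; rewrite mulr2n mulrDl mul1r lerD2l.
have [->|z0] := eqVneq z 0; first by rewrite /dir !scaler0 subr0 enorm0 enorm_ge0.
rewrite -{2}(dirK z) -scalerBl enormZ enorm_dir // mulr1.
by rewrite enorm_distC ler_dist_enorm.
Qed.

Lemma lsubmx_dir_dist k1 k2 (v d : 'rV[R]_(k1 + k2)) :
  enorm (lsubmx v - enorm v *: lsubmx d) <= enorm v * enorm (dir v - d).
Proof.
rewrite -{1}(dirK v) linearZ /= -scalerBr -linearB enormZ.
by rewrite ger0_norm ?enorm_ge0 // ler_wpM2l ?enorm_ge0 ?enorm_lsubmx.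
Qed.

End EuclideanNorm.

Definition eventually (P : nat -> Prop) := exists N, forall m, (N <= m)%N -> P m.

Lemma eventuallyI (P Q : nat -> Prop) :
  eventually P -> eventually Q -> eventually (fun m => P m /\ Q m).
Proof.
move=> [N1 P_] [N2 Q_]; exists (maxn N1 N2) => m; rewrite geq_max => /andP[m1 m2].
by split; [apply: P_ | apply: Q_].
Qed.

Lemma eventuallyS (P Q : nat -> Prop) :
  (forall m, P m -> Q m) -> eventually P -> eventually Q.
Proof. by move=> PQ [N P_]; exists N => m /P_ /PQ. Qed.

Lemma eventually_witness (P : nat -> Prop) : eventually P -> exists m, P m.
Proof. by move=> [N P_]; exists N; apply: P_. Qed.

Section Negligible.
Variable R : realType.
Variable k : nat.
Implicit Types (u v a b x z : nat -> 'rV[R]_k) (d : 'rV[R]_k).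

Lemma negl_scale u v (C : R) : 0 < C ->
  (forall e, 0 < e -> eventually (fun m => enorm (u m) <= C * e * enorm (v m))) ->
  negl u v.
Proof.
move=> C0 uv e e0; apply: eventuallyS (uv (e / C) (divr_gt0 e0 C0)) => m.
by rewrite [C * _]mulrC divfK ?gt_eqF.
Qed.

Lemma negl_sub_swap a b :
  negl (fun m => a m - b m) a -> negl (fun m => a m - b m) b.
Proof.
move=> ab e e0; set t := e / (1 + e).
have t0 : 0 < t by rewrite divr_gt0 // addr_gt0.
have te : t * (1 + e) = e by rewrite divfK // gt_eqF // addr_gt0.
apply: eventuallyS (ab t t0) => m.
have := enorm_sub_trans (a m) (b m) 0; rewrite !subr0.
move: (enorm_ge0 (a m - b m)) (enorm_ge0 (b m)) => ab_ge0 b_ge0 tri abm; nra.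
Qed.

Lemma negl_sub_cvg0 z x :
  negl (fun m => z m - x m) x -> cvg0 x -> cvg0 z.
Proof.
move=> zx x0 e e0; have e2 : 0 < e / 2 by rewrite divr_gt0.
apply: eventuallyS (eventuallyI (zx 1 ltr01) (x0 _ e2)) => m [zxm xm].
by have := enorm_sub_trans (z m) (x m) 0; rewrite !subr0; lra.
Qed.

Lemma negl_sub_dir z x d : (forall m, x m != 0) ->
  negl (fun m => z m - x m) x -> cvgto (fun m => dir (x m)) d ->
  cvgto (fun m => dir (z m)) d.
Proof.
move=> xn0 zx xd e e0; have e2 : 0 < e / 2 by rewrite divr_gt0.
have e4 : 0 < e / 4 by rewrite divr_gt0.
apply: eventuallyS (eventuallyI (zx _ e4) (xd _ e2)) => m [zxm xdm].
have xp : 0 < enorm (x m) by rewrite enorm_gt0.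
have zdx : enorm (dir (z m) - dir (x m)) <= e / 2.
  rewrite -(ler_pM2l xp); apply: le_trans (enorm_dirB _ _) _; lra.
by have := enorm_sub_trans (dir (z m)) (dir (x m)) d; lra.
Qed.

Lemma semiline_closed (a w : 'rV[R]_k) : sphere a ->
  (forall e, 0 < e -> exists2 t, 0 <= t & enorm (t *: a - w) < e) ->
  w = enorm w *: a.
Proof.
move=> a1 near_w; apply/eqP; rewrite -subr_eq0 -enorm_eq0 eq_le enorm_ge0 andbT.
apply/ler_addgt0Pr => e e0; rewrite add0r enorm_distC.
have [t t0 taw] := near_w (e / 2) (divr_gt0 e0 (ltr0Sn _ 1)).
have := ler_dist_enorm (t *: a) w; rewrite enormZ a1 mulr1 (ger0_norm t0).
have := enorm_sub_trans (enorm w *: a) (t *: a) w.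
by rewrite -scalerBl enormZ a1 mulr1 distrC; lra.
Qed.

Lemma tangent_dirsS (A B : 'rV[R]_k -> Prop) d : (forall y, A y -> B y) ->
  tangent_dirs A d -> tangent_dirs B d.
Proof.
move=> AB [d1 [x [xA xd]]]; split=> //; exists x; split=> // m.
by have [/AB ? ?] := xA m.
Qed.

End Negligible.

Lemma graphS (R : realType) n (S T : 'rV[R]_n -> Prop)
    (h : 'rV[R]_n -> 'rV[R]_n) z :
  (forall x, S x -> T x) -> graph S h z -> graph T h z.
Proof. by move=> ST [x [/ST ? ->]]; exists x. Qed.

Section LipschitzGraph.
Variables (R : realType) (n : nat) (h : 'rV[R]_n -> 'rV[R]_n) (r L : R).
Hypotheses (r0 : 0 < r) (L0 : 0 <= L) (h0 : h 0 = 0).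
Hypothesis hL : forall x y, ball0 r x -> ball0 r y ->
  enorm (h x - h y) <= L * enorm (x - y).

Definition graph_pt (x : 'rV[R]_n) : 'rV[R]_(n + n) := row_mx x (h x).

Lemma graphP S z : graph S h z -> z = graph_pt (lsubmx z) /\ S (lsubmx z).
Proof. by move=> [x [Sx ->]]; rewrite row_mxKl. Qed.

Lemma graph_ptB x y : ball0 r x -> ball0 r y ->
  enorm (graph_pt x - graph_pt y) <= (1 + L) * enorm (x - y).
Proof.
move=> rx ry; rewrite /graph_pt opp_row_mx add_row_mx.
by apply: le_trans (enorm_row_mx_le _ _) _; rewrite mulrDl mul1r lerD2l hL.
Qed.

Lemma graph_pt_le x : ball0 r x -> enorm (graph_pt x) <= (1 + L) * enorm x.
Proof.
move=> rx; have := @graph_ptB x 0 rx; rewrite /graph_pt h0 row_mx0 !subr0.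
by apply; rewrite /ball0 enorm0.
Qed.

Lemma tangent_graph_lsubmx S d :
  tangent_dirs (graph S h) d -> (1 + L)^-1 <= enorm (lsubmx d).
Proof.
move=> [_ [x [xS [x0 xd]]]]; apply/ler_addgt0Pr => e e0.
have [m [xm xdm]] := eventually_witness (eventuallyI (x0 r r0) (xd e e0)).
have [xE _] := graphP (proj1 (xS m)).
have xp : 0 < enorm (x m) by rewrite enorm_gt0 (proj2 (xS m)).
have lx : (1 + L)^-1 <= enorm (lsubmx (dir (x m))).
  rewrite linearZ enormZ ger0_norm ?invr_ge0 ?enorm_ge0 //.
  rewrite -(ler_pM2l xp) mulrA divff ?gt_eqF // mul1r ler_pdivrMr ?ltr_wpDr //.
  rewrite mulrC {1}xE graph_pt_le //.
  exact: le_lt_trans (enorm_lsubmx _) xm.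
have := enorm_lsubmx (dir (x m) - d); rewrite linearB /=.
by have := ler_dist_enorm (lsubmx (dir (x m))) (lsubmx d); rewrite ler_norml; lra.
Qed.

Lemma tangent_graph_lsubmx_neq0 S d : tangent_dirs (graph S h) d -> lsubmx d != 0.
Proof.
move=> /tangent_graph_lsubmx; rewrite -enorm_gt0; apply: lt_le_trans.
by rewrite invr_gt0 ltr_wpDr.
Qed.

Lemma tangent_graph_semiline a d : sphere a ->
  tangent_dirs (graph (semiline a) h) d -> lsubmx d = enorm (lsubmx d) *: a.
Proof.
move=> a1 [_ [x [xS [_ xd]]]]; apply: semiline_closed a1 _ => e e0.
have [m xdm] := eventually_witness (xd e e0).
have [xE [t [t0 tE]]] := graphP (proj1 (xS m)).
exists ((enorm (x m))^-1 * t); first by rewrite mulr_ge0 ?invr_ge0 ?enorm_ge0.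
rewrite -scalerA -tE -linearZ -linearB.
exact: le_lt_trans (enorm_lsubmx _) xdm.
Qed.

Lemma graph_pt_approx S a b d : sphere d -> (forall m, graph S h (b m)) ->
  cvg0 a -> negl (fun m => a m - b m) a -> cvgto (fun m => dir (a m)) d ->
  negl (fun m => a m - graph_pt (enorm (a m) *: lsubmx d)) a.
Proof.
move=> d1 bS a0 ab ad; apply: (@negl_scale _ _ _ _ (3 + 2 * L)).
  by rewrite ltr_wpDr ?mulr_ge0.
move=> e e0; have r2 : 0 < r / 2 by rewrite divr_gt0.
apply: eventuallyS (eventuallyI (eventuallyI (ab e e0) (ab 1 ltr01))
  (eventuallyI (ad e e0) (a0 _ r2))) => m [[abe ab1] [ade am]].
rewrite mul1r in ab1; have A0 := enorm_ge0 (a m).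
have [bE _] := graphP (bS m); set y := lsubmx (b m) in bE.
set u := enorm (a m) *: lsubmx d.
have ur : ball0 r u.
  rewrite /ball0 enormZ ger0_norm //; have := enorm_lsubmx d; rewrite d1; nra.
have yr : ball0 r y.
  apply: le_lt_trans (enorm_lsubmx _) _.
  by have := enorm_sub_trans (b m) (a m) 0; rewrite !subr0 enorm_distC; lra.
have yu : enorm (y - u) <= 2 * e * enorm (a m).
  have ya : enorm (y - lsubmx (a m)) <= e * enorm (a m).
    rewrite /y -linearB; apply: le_trans (enorm_lsubmx _) _.
    by rewrite enorm_distC.
  have au : enorm (lsubmx (a m) - u) <= e * enorm (a m).
    apply: le_trans (lsubmx_dir_dist _ _) _.
    by rewrite [e * _]mulrC ler_wpM2l // ltW.
  by have := enorm_sub_trans y (lsubmx (a m)) u; lra.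
have := graph_ptB yr ur; rewrite -bE.
have := enorm_sub_trans (a m) (b m) (graph_pt u).
have := ler_wpM2l (addr_ge0 ler01 L0) yu; lra.
Qed.

Lemma tangent_graph_to_semiline d : tangent_dirs (graph (fun _ => True) h) d ->
  tangent_dirs (graph (semiline (dir (lsubmx d))) h) d.
Proof.
move=> td; have d1 := tangent_graph_lsubmx_neq0 td.
move: td => [dS [x [xS [x0 xd]]]].
pose z m := graph_pt (enorm (x m) *: lsubmx d).
have zx : negl (fun m => z m - x m) x.
  have xx : negl (fun m => x m - x m) x.
    move=> e e0; exists 0%N => m _.
    by rewrite subrr enorm0 mulr_ge0 ?enorm_ge0 ?ltW.
  move=> e e0.
  apply: eventuallyS (graph_pt_approx dS (fun m => proj1 (xS m)) x0 xx xd e0).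
  by move=> m; rewrite enorm_distC.
split=> //; exists z; split; [move=> m; split | split].
- exists (enorm (x m) *: lsubmx d); split=> //.
  exists (enorm (x m) * enorm (lsubmx d)).
  by split; [rewrite mulr_ge0 ?enorm_ge0 | rewrite -scalerA dirK].
- apply/eqP => /(congr1 lsubmx); rewrite row_mxKl linear0 => /eqP.
  by rewrite scaler_eq0 enorm_eq0 (negbTE (proj2 (xS m))) (negbTE d1).
- exact: negl_sub_cvg0 zx x0.
- exact: negl_sub_dir (fun m => proj2 (xS m)) zx xd.
Qed.

Lemma SSP_map_semiline a : sphere a ->
  SSP_map (fun _ => True) h -> SSP_map (semiline a) h.
Proof.
move=> a1 hSSP s s0 [d [td sd]].
have td_full : tangent_dirs (graph (fun _ => True) h) d.
  by apply: tangent_dirsS td => y; apply: graphS.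
have [b [bS [sb _]]] := hSSP s s0 (ex_intro _ d (conj td_full sd)).
pose b' m := graph_pt (enorm (s m) *: lsubmx d).
have sb' : negl (fun m => s m - b' m) s := graph_pt_approx (proj1 td) bS s0 sb sd.
exists b'; split; last by split=> //; apply: negl_sub_swap.
move=> m; exists (enorm (s m) *: lsubmx d); split=> //.
exists (enorm (s m) * enorm (lsubmx d)).
by split; [rewrite mulr_ge0 ?enorm_ge0 | rewrite -scalerA -tangent_graph_semiline].
Qed.

Lemma SSP_map_of_semilines :
  (forall a, sphere a -> SSP_map (semiline a) h) -> SSP_map (fun _ => True) h.
Proof.
move=> hl s s0 [d [td sd]].
have a1 : sphere (dir (lsubmx d)) := enorm_dir (tangent_graph_lsubmx_neq0 td).
have td_line := tangent_graph_to_semiline td.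
have [b [bS sb]] := hl _ a1 s s0 (ex_intro _ d (conj td_line sd)).
by exists b; split=> // m; apply: graphS (bS m).
Qed.

End LipschitzGraph.

Theorem proposition4p9 (R : realType) (n : nat) (h : 'rV[R]_n -> 'rV[R]_n) :
  homeo_germ h ->
  lipschitz_germ h ->
  (exists c1 c2 r : R, 0 < c1 /\ 0 < c2 /\ 0 < r /\
     forall x, ball0 r x -> c1 * enorm x <= enorm (h x) /\ enorm (h x) <= c2 * enorm x) ->
  (SSP_map (fun _ : 'rV[R]_n => True) h <->
   forall a : 'rV[R]_n, sphere a -> SSP_map (semiline a) h).
Proof.
move=> [h0 _] [r [L [r0 hL]]] _.
have hL' x y : ball0 r x -> ball0 r y ->
    enorm (h x - h y) <= `|L| * enorm (x - y).
  move=> rx ry; apply: le_trans (hL x y rx ry) _.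
  by rewrite ler_wpM2r ?enorm_ge0 ?ler_norm.
split=> [hSSP a a1|].
  exact (SSP_map_semiline r0 (normr_ge0 L) hL' a1 hSSP).
exact (SSP_map_of_semilines r0 (normr_ge0 L) h0 hL').
Qed.
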